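(* Suppose $EAE(V)<\infty$. Then the condition ''$\mathbb{E}[V(yZ_T^0)]<\infty$ for all $y>0$'' holds if and only if $u(x,U)<\infty$ for some $x>0$.
   Context: Fix $T>0$ and a filtered probability space $(\Omega,\mathcal F,(\mathcal F_t)_{0\le t\le T},\mathbf P)$ satisfying the usual conditions. Fix $0<\lambda<1$ and a strictly positive càdlàg adapted stock price $S$. A $\lambda$-consistent price system is a strictly positive process $Z=(Z^0,Z^1)$ with $Z^0_0=1$, $Z^0$ a $\mathbf P$-martingale, $Z^1$ a $\mathbf P$-local martingale, and $Z^1_t/Z^0_t\in[(1-\lambda)S_t,S_t]$ a.s. for all $t$. Standing assumption: one such $Z$ is fixed. Following the paper, $\mathcal C(x)=\{f\in L^0_+(\mathbf P):\mathbb{E}[Z_T^0 f]\le x\}$ for $x>0$. A utility is a function $U:(0,\infty)\to\mathbb R$ that is non-constant, increasing, upper semicontinuous, with $U(\infty):=\lim_{x\to\infty}U(x)>0$ and $\lim_{x\to\infty}U(x)/x=0$; $U$ need not be concave. Set $U(0):=\lim_{x\downarrow0}U(x)$. For $f\ge0$, $\mathbb{E}[U(f)]:=-\infty$ if $U^-(f)\notin L^1$. The value function is $u(x,U):=\sup\{\mathbb{E}[U(f)]:f\in\mathcal C(x)\}$. The convex conjugate is $V(y):=\sup_{x>0}\{U(x)-xy\}$ (a convex, decreasing function finite on $(0,\infty)$), $\partial V(y)$ denotes its subdifferential at $y$, and the extended asymptotic elasticity is $EAE(V):=\limsup_{y\to0}\sup_{q\in\partial V(y)}\frac{|q|\,y}{V(y)}$.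 *)

From HB Require Import structures.
From mathcomp Require Import all_boot all_order all_algebra.
From mathcomp Require Import all_classical all_reals all_analysis.
Set Implicit Arguments. Unset Strict Implicit. Unset Printing Implicit Defensive.
Import Order.TTheory GRing.Theory Num.Theory.
Import numFieldNormedType.Exports.
Local Open Scope classical_set_scope.
Local Open Scope ring_scope.

Section Defs.
Context {R : realType} {d : measure_display} {Omega : measurableType d}.
Variable P : probability Omega R.

Definition filtration (T : R) (F : R -> set (set Omega)) : Prop :=
  (forall t, 0 <= t <= T -> sigma_algebra setT (F t) /\ F t `<=` measurable) /\
  (forall s t, 0 <= s -> s <= t -> t <= T -> F s `<=` F t).

Definition usual_conditions (T : R) (F : R -> set (set Omega)) : Prop :=
  filtration T F /\
  (forall N A, measurable N -> P N = 0%E -> A `<=` N -> F 0 A) /\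
  (forall t, 0 <= t < T ->
     forall A, (forall s, t < s <= T -> F s A) -> F t A).

Definition adapted (T : R) (F : R -> set (set Omega)) (X : R -> Omega -> R) :=
  forall t, 0 <= t <= T -> forall B : set R, measurable B -> F t (X t @^-1` B).

Definition cadlag (T : R) (X : R -> Omega -> R) :=
  forall w : Omega,
    (forall t, 0 <= t < T -> (fun s => X s w) @ at_right t --> X t w) /\
    (forall t, 0 < t <= T -> cvg ((fun s => X s w) @ at_left t)).

(** martingale on [0,T], stated without conditional expectations:
    E[X_t 1_A] = E[X_s 1_A] for s <= t and A in F_s. *)
Definition martingale (T : R) (F : R -> set (set Omega)) (X : R -> Omega -> R) :=
  adapted T F X /\
  (forall t, 0 <= t <= T -> P.-integrable setT (EFin \o X t)) /\
  (forall s t, 0 <= s -> s <= t -> t <= T -> forall A, F s A ->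
     (\int[P]_(w in A) (X t w)%:E = \int[P]_(w in A) (X s w)%:E)%E).

Definition stopping_time (T : R) (F : R -> set (set Omega))
  (tau : Omega -> \bar R) :=
  (forall w, (0 <= tau w)%E) /\
  (forall t, 0 <= t <= T -> F t [set w | (tau w <= t%:E)%E]).

Definition stopped (X : R -> Omega -> R) (tau : Omega -> \bar R) :
  R -> Omega -> R :=
  fun t w => match tau w with
             | r%:E => X (Num.min t r) w
             | _ => X t w
             end.

Definition local_martingale (T : R) (F : R -> set (set Omega))
  (X : R -> Omega -> R) :=
  adapted T F X /\
  exists tau : nat -> Omega -> \bar R,
    (forall n, stopping_time T F (tau n)) /\
    (forall n w, (tau n w <= tau n.+1 w)%E) /\
    {ae P, forall w, exists n, (T%:E <= tau n w)%E} /\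
    (forall n, martingale T F (fun t w => stopped X (tau n) t w - X 0 w)).

Definition consistent_price_system (T : R) (F : R -> set (set Omega))
  (lam : R) (S Z0 Z1 : R -> Omega -> R) : Prop :=
  (forall t w, 0 <= t <= T -> 0 < Z0 t w /\ 0 < Z1 t w) /\
  (forall w, Z0 0 w = 1) /\
  martingale T F Z0 /\
  local_martingale T F Z1 /\
  (forall t, 0 <= t <= T ->
     {ae P, forall w, (1 - lam) * S t w <= Z1 t w / Z0 t w <= S t w}).

Definition Cset (ZT : Omega -> R) (x : R) : set (Omega -> R) :=
  [set f : Omega -> R | measurable_fun setT f /\ (forall w, 0 <= f w) /\
           (\int[P]_w (ZT w * f w)%:E <= x%:E)%E].

End Defs.

Section Utility.
Context {R : realType}.

(** U : (0,oo) -> R is a utility (values at x <= 0 are irrelevant). *)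
Definition utility (U : R -> R) : Prop :=
  (exists x y : R, 0 < x /\ 0 < y /\ U x <> U y) /\
  (forall x y : R, 0 < x -> x <= y -> U x <= U y) /\
  (forall x : R, 0 < x -> forall e : R, 0 < e -> \forall z \near x, U z < U x + e) /\
  (0 < lim ((fun x : R => (U x)%:E) @ +oo%R))%E /\
  ((fun x : R => U x / x) @ +oo%R --> 0).

Definition Uext (U : R -> R) (x : R) : \bar R :=
  if 0 < x then (U x)%:E else lim ((fun z : R => (U z)%:E) @ 0^'+).

Definition conj_V (U : R -> R) (y : R) : R :=
  sup [set U x - x * y | x in `]0, +oo[%classic].

Definition subdiff (V : R -> R) (y : R) : set R :=
  [set q | forall z, 0 < z -> V y + q * (z - y) <= V z].

(** EAE(V) = limsup_{y -> 0+} sup_{q in dV(y)} |q| y / V(y). *)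
Definition EAE (V : R -> R) : \bar R :=
  ereal_inf [set ereal_sup
      [set ereal_sup [set (`|q| * y / V y)%:E | q in subdiff V y]
        | y in `]0, delta[%classic]
    | delta in `]0, +oo[%classic].

End Utility.

Section Value.
Context {R : realType} {d : measure_display} {Omega : measurableType d}.
Variable P : probability Omega R.

(** E[U(f)] for f >= 0, := -oo if U^-(f) is not integrable. *)
Definition EU (U : R -> R) (f : Omega -> R) : \bar R :=
  if (\int[P]_w ((fun w => Uext U (f w)) ^\- w) < +oo)%E
  then (\int[P]_w ((fun w => Uext U (f w)) ^\+ w)
        - \int[P]_w ((fun w => Uext U (f w)) ^\- w))%E
  else -oo%E.

Definition value_u (ZT : Omega -> R) (x : R) (U : R -> R) : \bar R :=
  ereal_sup [set EU U f | f in Cset P ZT x].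

(** "E[V(y Z_T^0)] < oo", read as: the positive part has finite expectation. *)
Definition EV_finite (U : R -> R) (ZT : Omega -> R) (y : R) : Prop :=
  (\int[P]_w (Num.max (conj_V U (y * ZT w)) 0)%:E < +oo)%E.

End Value.

From HB Require Import structures.
From mathcomp Require Import all_boot all_order all_algebra.
From mathcomp Require Import all_classical all_reals all_analysis.
From mathcomp Require Import measurable_realfun.
From mathcomp Require Import ring lra.
Import Order.TTheory GRing.Theory Num.Theory.
Import numFieldNormedType.Exports.
Set Implicit Arguments. Unset Strict Implicit. Unset Printing Implicit Defensive.
Local Open Scope classical_set_scope.
Local Open Scope ring_scope.

(* Fenchel's inequality U(f) <= V(y Z) + y Z f bounds u(x) by E[V(y Z)^+] + x y,
   where Z = Z_T^0.  Conversely, EAE(V) < oo yields a doubling property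
   V(r e) <= 2 V(e) near 0, which spreads finiteness of E[V(y Z)^+] from one y to
   all y.  For one large y it comes from the budget constraint: on a geometric grid
   of values e of y Z, investing a near maximizer of U(t) - t e is affordable and
   earns about half of V(y Z), so u(x) < oo bounds the expectations of the
   truncations of V(y Z)^+ uniformly. *)

Lemma exists_expr_lt (R : realType) (r e : R) : 0 < r -> r < 1 -> 0 < e ->
  exists N, r ^+ N < e.
Proof.
move=> r_gt0 r_lt1 e_gt0; have r_norm : `|r| < 1 by rewrite gtr0_norm.
have /cvgrPdist_lt/(_ e e_gt0) [N _ HN] := cvg_expr r_norm.
by exists N; have := HN N (leqnn N); rewrite /= sub0r normrN gtr0_norm ?exprn_gt0.
Qed.

Section conjugate.
Variables (R : realType) (U : R -> R).
Hypothesis U_nondecr : forall x y : R, 0 < x -> x <= y -> U x <= U y.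
Hypothesis U_sublinear : (fun x : R => U x / x) @ +oo%R --> (0 : R).

Lemma sublinear_lt (c : R) : 0 < c ->
  exists M, forall x, M < x -> 0 < x -> U x < x * c.
Proof.
move=> c_gt0; have /cvgrPdist_lt/(_ c c_gt0) [M [_ HM]] := U_sublinear.
exists M => x Mx x_gt0; have := HM x Mx; rewrite /= sub0r normrN.
by move=> /(le_lt_trans (ler_norm _)); rewrite ltr_pdivrMr // mulrC.
Qed.

Lemma has_sup_conj_V y : 0 < y -> has_sup [set U x - x * y | x in `]0, +oo[].
Proof.
move=> y_gt0; split; first by exists (U 1 - 1 * y), 1; rewrite //= in_itv /= andbT.
have [M HM] := sublinear_lt y_gt0.
pose A := Num.max M 1; have A_gt0 : 0 < A by rewrite lt_max ltr01 orbT.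
exists (Num.max (U A) 0) => _ [x /= + <-]; rewrite in_itv /= andbT => x_gt0.
rewrite le_max; case: (leP x A) => xA.
  have := U_nondecr x_gt0 xA; have : 0 <= x * y by rewrite mulr_ge0 // ltW.
  by move=> *; apply/orP; left; lra.
have Mx : M < x by apply: le_lt_trans xA; rewrite le_max lexx.
by apply/orP; right; rewrite subr_le0 ltW // HM.
Qed.

Lemma conj_V_ge y x : 0 < y -> 0 < x -> U x - x * y <= conj_V U y.
Proof.
move=> y_gt0 x_gt0; apply: (sup_upper_bound (has_sup_conj_V y_gt0)).
by exists x; rewrite //= in_itv /= andbT.
Qed.

Lemma conj_V_approx y e : 0 < y -> 0 < e ->
  exists2 x, 0 < x & conj_V U y - e < U x - x * y.
Proof.
move=> y_gt0 e_gt0.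
have [_ [x /= + <-] ?] := sup_adherent e_gt0 (has_sup_conj_V y_gt0).
by rewrite in_itv /= andbT => x_gt0; exists x.
Qed.

Lemma conj_V_nonincr y y' : 0 < y -> y <= y' -> conj_V U y' <= conj_V U y.
Proof.
move=> y_gt0 yy'; apply: ge_sup.
  by exists (U 1 - 1 * y'), 1; rewrite //= in_itv /= andbT.
move=> _ [x /= + <-]; rewrite in_itv /= andbT => x_gt0.
by apply: le_trans (conj_V_ge y_gt0 x_gt0); rewrite lerB // ler_pM2l.
Qed.

Lemma Uext_le_conj_V x e : 0 <= x -> 0 < e ->
  (Uext U x <= (conj_V U e + x * e)%:E)%E.
Proof.
move=> x_ge0 e_gt0; rewrite /Uext; case: ifPn => [x_gt0|].
  by rewrite lee_fin; have := conj_V_ge e_gt0 x_gt0; lra.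
rewrite -leNgt => x_le0; have -> : x = 0 by apply/eqP; rewrite eq_le x_le0.
rewrite mul0r addr0.
have U_cvg := @nondecreasing_at_right_cvge R (fun z => (U z)%:E) 0 (+oo%O) erefl.
rewrite (cvg_lim _ (U_cvg _)) //; last first.
  by move=> a b; rewrite !in_itv /= !andbT lee_fin => a_gt0 _; exact: U_nondecr.
apply/lee_addgt0Pr => t t_gt0; have te_gt0 : 0 < t / e by rewrite divr_gt0.
apply: le_trans (ereal_inf_lbound _) _.
  by exists (t / e); rewrite //= in_itv /= te_gt0.
rewrite -EFinD lee_fin; have := conj_V_ge e_gt0 te_gt0.
by rewrite divfK ?gt_eqF //; lra.
Qed.

Section subdifferential.
Variable z : R.
Hypothesis z_gt0 : 0 < z.

Let near_max e := [set x | 0 < x /\ conj_V U z - e <= U x - x * z].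

Let near_max_has_sup e : 0 < e -> has_sup (near_max e).
Proof.
move=> e_gt0; split.
  by have [x x_gt0 ?] := conj_V_approx z_gt0 e_gt0; exists x; split => //; exact: ltW.
have [M HM] := sublinear_lt (divr_gt0 z_gt0 (@ltr0Sn R 1)).
exists (Num.max M (2 * (e - conj_V U z) / z)) => x [x_gt0 hx].
rewrite le_max; case: (leP x M) => [xM|xM]; first by apply/orP; left.
apply/orP; right.
have := HM x xM x_gt0; rewrite ler_pdivlMr // mulrA => ?; lra.
Qed.

(* The subgradient at [z] is [- s], where [s] is the limit of the suprema of
   the [e]-maximizers of [U x - x * z] as [e] decreases to [0]. *)
Let s := inf [set sup (near_max e) | e in `]0, +oo[].

Let has_inf_sups : has_inf [set sup (near_max e) | e in `]0, +oo[].
Proof.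
split; first by exists (sup (near_max 1)), 1; rewrite //= in_itv /= andbT.
exists 0 => _ [e /= + <-]; rewrite in_itv /= andbT => e_gt0.
have [[x [x_gt0 hx]] _] := near_max_has_sup e_gt0.
apply: le_trans (ltW x_gt0) _.
exact: (sup_upper_bound (near_max_has_sup e_gt0)).
Qed.

Let subdiff_left y e : 0 < y -> y <= z -> 0 < e ->
  conj_V U z + s * (z - y) <= conj_V U y + e * (1 + z).
Proof.
move=> y_gt0 yz e_gt0.
have [x [x_gt0 hx] xs] := sup_adherent e_gt0 (near_max_has_sup e_gt0).
have s_le : s <= sup (near_max e).
  by apply: (ge_inf has_inf_sups.2); exists e; rewrite //= in_itv /= andbT.
have : (s - e) * (z - y) <= x * (z - y).
  by apply: ler_wpM2r; rewrite ?subr_ge0 //; lra.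
have : e * (z - y) <= e * z by apply: ler_wpM2l; lra.
have := conj_V_ge y_gt0 x_gt0.
rewrite !mulrBr !mulrBl mulrDr; lra.
Qed.

Let subdiff_right y e : 0 < y -> z <= y -> 0 < e ->
  conj_V U z + s * (z - y) <= conj_V U y + e * (1 + y).
Proof.
move=> y_gt0 zy e_gt0.
have [_ [e1 /= + <-] ha] := inf_adherent e_gt0 has_inf_sups.
rewrite in_itv /= andbT => e1_gt0.
have e2_gt0 : 0 < Num.min e1 e by rewrite lt_min e1_gt0.
have [[x [x_gt0 hx]] _] := near_max_has_sup e2_gt0.
have xs : x <= s + e.
  have x_le : x <= sup (near_max (Num.min e1 e)).
    exact: (sup_upper_bound (near_max_has_sup e2_gt0)).
  apply: le_trans x_le _.
  apply: (le_trans _ (ltW ha)); apply: sup_le; last exact: near_max_has_sup.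
  - move=> t [t_gt0 ht]; exists t => //.
    have le_e1 : Num.min e1 e <= e1 by rewrite ge_min lexx.
    by split => //; split => //; lra.
  - exact: (near_max_has_sup e2_gt0).1.
have : x * (y - z) <= (s + e) * (y - z) by apply: ler_wpM2r; rewrite ?subr_ge0.
have : Num.min e1 e <= e by rewrite ge_min lexx orbT.
have : 0 <= e * z by rewrite mulr_ge0 // ltW.
have := conj_V_ge y_gt0 x_gt0.
rewrite !mulrBr !mulrDl mulrDr; lra.
Qed.

Lemma subdiff_conj_V_nonempty : exists q, subdiff (conj_V U) z q.
Proof.
exists (- s) => /= y y_gt0; rewrite mulNr -mulrN opprB.
apply/ler_addgt0Pr => e e_gt0.
have [yz|zy] := leP y z.
  have z1_gt0 : 0 < 1 + z by lra.
  by have := subdiff_left y_gt0 yz (divr_gt0 e_gt0 z1_gt0); rewrite divfK ?gt_eqF.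
have y1_gt0 : 0 < 1 + y by lra.
by have := subdiff_right y_gt0 (ltW zy) (divr_gt0 e_gt0 y1_gt0); rewrite divfK ?gt_eqF.
Qed.

End subdifferential.

End conjugate.

Lemma utility_exists_pos (R : realType) (U : R -> R) :
  utility U -> exists2 x : R, 0 < x & 0 < U x.
Proof.
case=> _ [U_nondecr [_ [Uoo_gt0 _]]]; apply: contrapT => no_pos.
have U_le0 x : 0 < x -> U x <= 0.
  by move=> x_gt0; rewrite leNgt; apply/negP => ?; apply: no_pos; exists x.
pose U1 x := U (Num.max x 1).
have U1_gt0 (x : R) : 0 < Num.max x 1 by rewrite lt_max ltr01 orbT.
have U1_nd : {homo U1 : x y / x <= y}.
  by move=> x y xy; apply: U_nondecr => //; rewrite le_max2 ?xy ?lexx.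
have U1_ub : has_ubound (range U1) by exists 0 => _ [x _ <-]; exact: U_le0.
have sup_le0 : sup (range U1) <= 0.
  by apply: ge_sup; [exists (U1 0), 0 | move=> _ [x _ <-]; exact: U_le0].
have U_cvg : (U x)%:E @[x --> +oo] --> (sup (range U1))%:E.
  apply: cvg_EFin; first by near=> x.
  apply: cvg_trans (nondecreasing_cvgr U1_nd U1_ub); apply: near_eq_cvg.
  near=> x; rewrite /U1 max_l // ltW //; near: x; exact: nbhs_pinfty_gt.
by move: Uoo_gt0; rewrite (cvg_lim _ U_cvg) // lte_fin; lra.
Unshelve. all: by end_near.
Qed.

Lemma EAE_finite_bound (R : realType) (V : R -> R) : (EAE V < +oo)%E ->
  exists2 d : R, 0 < d & exists C : R, forall y q, 0 < y -> y < d ->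
    subdiff V y q -> `|q| * y / V y <= C.
Proof.
move=> /ereal_inf_lt [_ [d /= + <-] EAE_d]; rewrite in_itv /= andbT => d_gt0.
exists d => //; set S := ereal_sup _ in EAE_d.
exists (fine S) => y q y_gt0 yd Vq.
have : ((`|q| * y / V y)%:E <= S)%E.
  apply: (@le_trans _ _ (ereal_sup [set (`|p| * y / V y)%:E | p in subdiff V y])).
    by apply: ereal_sup_ubound; exists q.
  by apply: ereal_sup_ubound; exists y; rewrite //= in_itv /= y_gt0.
by clearbody S; move: EAE_d; case: S => [r| |] //= _; rewrite lee_fin.
Qed.

(* For a subgradient [q] of [V] at [r e], [V(r e) - V(e) <= - q (e - r e)], and
   the EAE bound [|q| r e <= C V(r e)] with [r = 2C/(2C+1)] makes the right-hand
   side at most [V(r e) / 2]. *)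
Lemma conj_V_doubling (R : realType) (U : R -> R) : utility U ->
  (EAE (conj_V U) < +oo)%E ->
  exists d : R, exists r : R, [/\ 0 < d, 0 < r, r < 1,
    (forall e, 0 < e -> e < d -> 0 < conj_V U e) &
    (forall e, 0 < e -> r * e < d -> conj_V U (r * e) <= 2 * conj_V U e)].
Proof.
move=> Uu EAE_fin; have [x1 x1_gt0 Ux1_gt0] := utility_exists_pos Uu.
case: Uu => _ [U_nondecr [_ [_ U_sublinear]]].
have [d1 d1_gt0 [C HC]] := EAE_finite_bound EAE_fin.
have V_gt0 e : 0 < e -> e < U x1 / x1 -> 0 < conj_V U e.
  move=> e_gt0; rewrite ltr_pdivlMr // => ex1.
  by apply: lt_le_trans (conj_V_ge U_nondecr U_sublinear e_gt0 x1_gt0); lra.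
pose d := Num.min (U x1 / x1) d1; pose C' := Num.max C 1.
have C'_gt0 : 0 < C' by rewrite lt_max ltr01 orbT.
have CC' : C <= C' by rewrite le_max lexx.
have d_le1 : d <= U x1 / x1 by rewrite ge_min lexx.
have d_le2 : d <= d1 by rewrite ge_min lexx orbT.
pose r := 2 * C' / (2 * C' + 1).
have r_gt0 : 0 < r by rewrite divr_gt0 // ?mulr_gt0 //; lra.
exists d, r; split => //.
- by rewrite lt_min divr_gt0.
- by rewrite ltr_pdivrMr; lra.
- by move=> e e_gt0 ed; apply: V_gt0 => //; exact: lt_le_trans d_le1.
move=> e e_gt0 re_lt.
have re_gt0 : 0 < r * e by rewrite mulr_gt0.
have [q Vq] := subdiff_conj_V_nonempty U_nondecr U_sublinear re_gt0.
have Vre_gt0 : 0 < conj_V U (r * e) by apply: V_gt0 => //; exact: lt_le_trans d_le1.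
have q_bound : `|q| * (r * e) <= C' * conj_V U (r * e).
  rewrite -ler_pdivrMr //; apply: le_trans CC'.
  exact: HC (lt_le_trans re_lt d_le2) Vq.
have gap : e - r * e = (r * e) / (2 * C').
  by rewrite /r; field; apply/andP; split; apply/eqP; lra.
have gap_ge0 : 0 <= e - r * e by rewrite gap divr_ge0 // ?ltW // mulr_gt0.
have : - q * (e - r * e) <= conj_V U (r * e) / 2.
  apply: le_trans (_ : `|q| * (e - r * e) <= _).
    by apply: ler_wpM2r => //; rewrite -normrN ler_norm.
  rewrite gap mulrA ler_pdivrMr ?mulr_gt0 //.
  by have -> : conj_V U (r * e) / 2 * (2 * C') = C' * conj_V U (r * e) by field.
have := Vq e e_gt0; rewrite mulNr; lra.
Qed.

Section monotone_composition.
Variables (R : realType) (d : measure_display) (T : measurableType d).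

Lemma measurable_nondecr_comp (g : R -> R) (f : T -> R) :
  (forall x y, 0 < x -> x <= y -> g x <= g y) ->
  measurable_fun setT f -> (forall t, 0 < f t) -> measurable_fun setT (g \o f).
Proof.
move=> g_nd mf f_gt0; have -> : g \o f = (g \o expR) \o (@ln R \o f).
  by apply/funext => t /=; rewrite lnK // posrE.
apply: measurableT_comp; last exact: measurableT_comp.
apply: nondecreasing_measurable => // x y xy /=.
by apply: g_nd; [exact: expR_gt0 | rewrite ler_expR].
Qed.

Lemma measurable_nonincr_comp (g : R -> R) (f : T -> R) :
  (forall x y, 0 < x -> x <= y -> g y <= g x) ->
  measurable_fun setT f -> (forall t, 0 < f t) -> measurable_fun setT (g \o f).
Proof.
move=> g_ni mf f_gt0; have -> : g \o f = (g \o expR) \o (@ln R \o f).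
  by apply/funext => t /=; rewrite lnK // posrE.
apply: measurableT_comp; last exact: measurableT_comp.
apply: nonincreasing_measurable => // x y xy /=.
by apply: g_ni; [exact: expR_gt0 | rewrite ler_expR].
Qed.

End monotone_composition.

Section probability_integral.
Variables (R : realType) (d : measure_display) (Omega : measurableType d).
Variable P : probability Omega R.

Lemma integral_le_lin (g : Omega -> \bar R) (h1 h2 : Omega -> R) (a1 a2 k : R) :
  0 <= a1 -> 0 <= a2 -> 0 <= k ->
  measurable_fun setT g -> measurable_fun setT h1 -> measurable_fun setT h2 ->
  (forall w, 0 <= g w)%E -> (forall w, 0 <= h1 w) -> (forall w, 0 <= h2 w) ->
  (forall w, g w <= (a1 * h1 w + a2 * h2 w + k)%:E)%E ->
  (\int[P]_w g w <=
     a1%:E * \int[P]_w (h1 w)%:E + a2%:E * \int[P]_w (h2 w)%:E + k%:E)%E.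
Proof.
move=> a1_ge0 a2_ge0 k_ge0 mg /measurable_EFinP mh1 /measurable_EFinP mh2.
move=> g_ge0 h1_ge0 h2_ge0 g_le.
have mah1 : measurable_fun setT (fun w => a1%:E * (h1 w)%:E)%E.
  exact: emeasurable_funM.
have mah2 : measurable_fun setT (fun w => a2%:E * (h2 w)%:E)%E.
  exact: emeasurable_funM.
have ah_ge0 a h w : 0 <= a -> 0 <= h w -> (0 <= a%:E * (h w)%:E)%E.
  by move=> *; rewrite -EFinM lee_fin mulr_ge0.
apply: (@le_trans _ _ (\int[P]_w (a1%:E * (h1 w)%:E + a2%:E * (h2 w)%:E + k%:E))%E).
  apply: ge0_le_integral => //.
  by apply: emeasurable_funD; [exact: emeasurable_funD | exact: measurable_cst].
rewrite ge0_integralD //; last 2 first.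
- by move=> w _; rewrite adde_ge0 ?ah_ge0.
- exact: emeasurable_funD.
rewrite ge0_integralD // ?ge0_integralZl //;
  try by move=> w _; rewrite ?ah_ge0 ?lee_fin.
rewrite integral_cst // leeD2l // -[leRHS]mule1 lee_pmul // probability_le1 //.
Qed.

Lemma integral_le_affine (g : Omega -> \bar R) (h : Omega -> R) (a k : R) :
  0 <= a -> 0 <= k -> measurable_fun setT g -> measurable_fun setT h ->
  (forall w, 0 <= g w)%E -> (forall w, 0 <= h w) ->
  (forall w, g w <= (a * h w + k)%:E)%E ->
  (\int[P]_w g w <= a%:E * \int[P]_w (h w)%:E + k%:E)%E.
Proof.
move=> a_ge0 k_ge0 mg mh g_ge0 h_ge0 g_le.
have := @integral_le_lin g h h a 0 k a_ge0 (lexx 0) k_ge0 mg mh mh g_ge0 h_ge0 h_ge0.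
by rewrite mul0e adde0; apply=> w; rewrite mul0r addr0.
Qed.

Lemma integral_le_cst (g : Omega -> \bar R) (k : R) : 0 <= k ->
  measurable_fun setT g -> (forall w, 0 <= g w)%E -> (forall w, g w <= k%:E)%E ->
  (\int[P]_w g w <= k%:E)%E.
Proof.
move=> k_ge0 mg g_ge0 g_le.
have := @integral_le_affine g (fun=> 0) 0 k (lexx 0) k_ge0 mg (measurable_cst _) g_ge0.
by rewrite mul0e add0e; apply=> // w; rewrite mul0r add0r.
Qed.

End probability_integral.

Section expected_utility.
Variables (R : realType) (d : measure_display) (Omega : measurableType d).
Variables (P : probability Omega R) (U : R -> R).
Hypothesis U_nondecr : forall x y : R, 0 < x -> x <= y -> U x <= U y.
Hypothesis U_sublinear : (fun x : R => U x / x) @ +oo%R --> (0 : R).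

Lemma measurable_conj_V_comp (Z : Omega -> R) y : 0 < y ->
  measurable_fun setT Z -> (forall w, 0 < Z w) ->
  measurable_fun setT (fun w => conj_V U (y * Z w)).
Proof.
move=> y_gt0 mZ Z_gt0; apply: (measurable_nonincr_comp (g := conj_V U)).
- by move=> a b a_gt0 ab; exact: conj_V_nonincr.
- by apply: measurable_funM => //; exact: measurable_cst.
- by move=> w; rewrite mulr_gt0.
Qed.

Lemma measurable_Uext_comp (f : Omega -> R) : measurable_fun setT f ->
  measurable_fun setT (fun w => Uext U (f w)).
Proof.
move=> mf; have -> : (fun w => Uext U (f w)) =
    (fun w => if 0 < f w then (U (expR (ln (f w))))%:E else Uext U 0).
  by apply/funext => w; rewrite /Uext ltxx; case: ifP => // f_gt0; rewrite lnK.
apply: measurable_fun_ifT; last exact: measurable_cst.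
  by apply: measurable_fun_ltr => //; exact: measurable_cst.
apply/measurable_EFinP.
apply: (measurable_nondecr_comp (g := U) (f := fun w => expR (ln (f w)))) => //.
  by apply: measurableT_comp; [exact: measurable_expR | exact: measurableT_comp].
by move=> w; exact: expR_gt0.
Qed.

Lemma EU_le_EV (Z f : Omega -> R) x y : 0 < y ->
  measurable_fun setT Z -> (forall w, 0 < Z w) -> Cset P Z x f ->
  (EU P U f <= \int[P]_w (Num.max (conj_V U (y * Z w)) 0)%:E + (y * x)%:E)%E.
Proof.
move=> y_gt0 mZ Z_gt0 [mf [f_ge0 Zf_le]].
rewrite /EU; case: ifPn => [Um_fin|]; last by rewrite leNye.
set Up := (fun w => Uext U (f w))^\+%E; set Um := (fun w => Uext U (f w))^\-%E.
have Um_ge0 : (0 <= \int[P]_w Um w)%E by apply: integral_ge0 => w _; exact: funeneg_ge0.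
apply: (@le_trans _ _ (\int[P]_w Up w)%E).
  by rewrite leeBlDr ?ge0_fin_numE // leeDl.
apply: le_trans.
  apply: (@integral_le_lin _ _ _ P Up (fun w => Num.max (conj_V U (y * Z w)) 0)
    (fun w => Z w * f w) 1 y 0) => //; try exact: ltW.
  - exact/measurable_funepos/measurable_Uext_comp.
  - by apply: measurable_maxr; [exact: measurable_conj_V_comp | exact: measurable_cst].
  - exact: measurable_funM.
  - by move=> w; exact: funepos_ge0.
  - by move=> w; rewrite le_max lexx orbT.
  - by move=> w; rewrite mulr_ge0 // ltW.
  move=> w; rewrite /Up funeposE mul1r addr0 ge_max; apply/andP; split.
    have yZ_gt0 : 0 < y * Z w by rewrite mulr_gt0.
    apply: le_trans (Uext_le_conj_V U_nondecr U_sublinear (f_ge0 w) yZ_gt0) _.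
    by rewrite lee_fin lerD ?le_max ?lexx // mulrCA [f w * _]mulrC.
  by rewrite lee_fin addr_ge0 ?le_max ?lexx ?orbT // !mulr_ge0 // ltW.
rewrite mul1e adde0 leeD2l // EFinM.
apply: lee_pmul => //; first by rewrite lee_fin ltW.
by apply: integral_ge0 => w _; rewrite lee_fin mulr_ge0 // ltW.
Qed.

Lemma value_u_le_EV (Z : Omega -> R) x y : 0 < y ->
  measurable_fun setT Z -> (forall w, 0 < Z w) ->
  (value_u P Z x U <= \int[P]_w (Num.max (conj_V U (y * Z w)) 0)%:E + (y * x)%:E)%E.
Proof.
move=> y_gt0 mZ Z_gt0; apply: ge_ereal_sup => _ [f Cf <-].
exact: EU_le_EV.
Qed.

Lemma EU_ge (f g : Omega -> R) (i k : R) :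
  measurable_fun setT f -> (forall w, 0 < f w) ->
  measurable_fun setT g -> (forall w, 0 <= g w) -> 0 <= k ->
  (\int[P]_w (g w)%:E = i%:E)%E -> (forall w, g w - k <= U (f w)) ->
  ((i - k)%:E <= EU P U f)%E.
Proof.
move=> mf f_gt0 mg g_ge0 k_ge0 int_g Uf_ge.
pose Up w := Num.max (U (f w)) 0; pose Um w := Num.max (- U (f w)) 0.
have mUf : measurable_fun setT (fun w => U (f w)).
  exact: (measurable_nondecr_comp (g := U)).
have mUp : measurable_fun setT Up by apply: measurable_maxr => //; exact: measurable_cst.
have mUm : measurable_fun setT Um.
  by apply: measurable_maxr; [exact: measurableT_comp | exact: measurable_cst].
have Up_ge0 w : 0 <= Up w by rewrite le_max lexx orbT.
have Um_ge0 w : 0 <= Um w by rewrite le_max lexx orbT.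
have int_Um : (\int[P]_w (Um w)%:E <= k%:E)%E.
  apply: integral_le_cst => //; first exact/measurable_EFinP.
  move=> w; rewrite lee_fin ge_max k_ge0 andbT; have := Uf_ge w; have := g_ge0 w; lra.
have Um_fin : (\int[P]_w (Um w)%:E)%E \is a fin_num.
  rewrite ge0_fin_numE; first exact: le_lt_trans int_Um (ltry _).
  by apply: integral_ge0 => w _; rewrite lee_fin.
have -> : EU P U f = (\int[P]_w (Up w)%:E - \int[P]_w (Um w)%:E)%E.
  rewrite /EU.
  have -> : (fun w => Uext U (f w))^\+%E = (fun w => (Up w)%:E).
    by apply/funext => w; rewrite funeposE /Uext f_gt0 EFin_max.
  have -> : (fun w => Uext U (f w))^\-%E = (fun w => (Um w)%:E).
    by apply/funext => w; rewrite funenegE /Uext f_gt0 -EFinN EFin_max.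
  by rewrite ifT // (le_lt_trans int_Um) ?ltry.
have int_gUm : (\int[P]_w (g w + Um w)%:E = i%:E + \int[P]_w (Um w)%:E)%E.
  under eq_integral do rewrite EFinD.
  rewrite ge0_integralD ?int_g //; try by move=> w _; rewrite lee_fin.
  1,2: exact/measurable_EFinP.
have : (\int[P]_w (g w + Um w)%:E <= 1%:E * \int[P]_w (Up w)%:E + k%:E)%E.
  apply: integral_le_affine => //.
  - by apply/measurable_EFinP; exact: measurable_funD.
  - by move=> w; rewrite lee_fin addr_ge0.
  move=> w; rewrite lee_fin mul1r /Up /Um; have := Uf_ge w.
  by case: (leP 0 (U (f w))) => ?; case: (leP 0 (- U (f w))) => ?; lra.
rewrite int_gUm mul1e; move: Um_fin.
case: (\int[P]_w (Um w)%:E)%E => [m| |] // _.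
case: (\int[P]_w (Up w)%:E)%E => [p| |] //=.
- by rewrite -!EFinD !lee_fin; lra.
- by rewrite addye ?leey.
Qed.

End expected_utility.

Section doubling.
Variables (R : realType) (U : R -> R).
Hypothesis U_nondecr : forall x y : R, 0 < x -> x <= y -> U x <= U y.
Hypothesis U_sublinear : (fun x : R => U x / x) @ +oo%R --> (0 : R).
Variables (d r : R).
Hypotheses (d_gt0 : 0 < d) (r_gt0 : 0 < r) (r_lt1 : r < 1).
Hypothesis V_gt0 : forall e, 0 < e -> e < d -> 0 < conj_V U e.
Hypothesis V_doubling :
  forall e, 0 < e -> r * e < d -> conj_V U (r * e) <= 2 * conj_V U e.

Lemma conj_V_pos_doubling e : 0 < e ->
  Num.max (conj_V U (r * e)) 0 <= 2 * Num.max (conj_V U e) 0 + Num.max (conj_V U d) 0.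
Proof.
move=> e_gt0; have re_gt0 : 0 < r * e by rewrite mulr_gt0.
have [Ve_le Vd_le] :
    conj_V U e <= Num.max (conj_V U e) 0 /\ conj_V U d <= Num.max (conj_V U d) 0.
  by rewrite !le_max !lexx.
have [Ve_ge0 Vd_ge0] : 0 <= Num.max (conj_V U e) 0 /\ 0 <= Num.max (conj_V U d) 0.
  by rewrite !le_max !lexx !orbT.
rewrite ge_max; have [red|dre] := ltP (r * e) d.
  have := V_doubling e_gt0 red; have := V_gt0 re_gt0 red.
  by move=> *; apply/andP; split; lra.
have := conj_V_nonincr U_nondecr U_sublinear d_gt0 dre.
by move=> *; apply/andP; split; lra.
Qed.

Definition near_argmax e := xget 1 [set t | 0 < t /\ conj_V U e - 1 < U t - t * e].

Lemma near_argmaxP e : 0 < e ->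
  0 < near_argmax e /\ conj_V U e - 1 < U (near_argmax e) - near_argmax e * e.
Proof.
move=> e_gt0; rewrite /near_argmax; set A := [set t | _].
have [x x_gt0 ?] := conj_V_approx U_nondecr U_sublinear e_gt0 ltr01.
by have /= := @xgetPex _ 1 A (ex_intro _ x (conj x_gt0 _)); apply.
Qed.

(* A near maximizer [t] of [U t - t e] with [e] in [(eta, eta / r]] pays for
   itself: [U t] controls [V eta] by the doubling property, and comparing
   [U t - t r e <= V (r e)] with [U t - t e > V e - 1] bounds [t eta]. *)
Lemma near_argmax_grid eta e : 0 < eta -> eta < e -> r * e <= eta -> e <= d ->
  let t := near_argmax e in
  0 < t /\ (1 - r) * (eta * t) <= conj_V U eta + 1 /\ conj_V U eta <= 2 * (U t + 1).
Proof.
move=> eta_gt0 eta_e re_eta e_le_d; cbv zeta.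
have e_gt0 := lt_trans eta_gt0 eta_e.
have re_gt0 : 0 < r * e by rewrite mulr_gt0.
have re_d : r * e < d by apply: lt_le_trans e_le_d; rewrite gtr_pMl.
have [t_gt0 t_max] := near_argmaxP e_gt0; set t := near_argmax e in t_gt0 t_max *.
have V_re := conj_V_ge U_nondecr U_sublinear re_gt0 t_gt0.
have V_eta_re : conj_V U eta <= conj_V U (r * e) by exact: conj_V_nonincr.
have V_e_eta : conj_V U e <= conj_V U eta by exact/conj_V_nonincr/ltW.
have := V_doubling e_gt0 re_d; have := V_gt0 eta_gt0 (lt_le_trans eta_e e_le_d).
move=> V_eta_gt0 V_re_le; split=> //; split; first last.
  have : 0 < t * e by rewrite mulr_gt0.
  lra.
have : (1 - r) * (eta * t) <= (1 - r) * (e * t).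
  by apply: ler_wpM2l; [rewrite subr_ge0 ltW | rewrite ler_wpM2r // ltW].
have -> : (1 - r) * (e * t) = (U t - t * (r * e)) - (U t - t * e) by ring.
lra.
Qed.

Fixpoint grid_pick (g : R -> R) (k j : nat) (b eta : R) : R :=
  if k is k'.+1 then
    if eta < d * r ^+ j.+1 then grid_pick g k' j.+1 b eta else g (d * r ^+ j)
  else b.

Lemma grid_pickP g k j b eta : eta < d * r ^+ j -> d * r ^+ (j + k) <= eta ->
  exists m, [/\ grid_pick g k j b eta = g (d * r ^+ m),
                d * r ^+ m.+1 <= eta & eta < d * r ^+ m].
Proof.
elim: k j => [|k IH] j /= eta_lt eta_ge.
  by rewrite addn0 in eta_ge; move: (lt_le_trans eta_lt eta_ge); rewrite ltxx.
case: ifPn => [eta_lt'|]; first by apply: IH; rewrite // addSnnS.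
by rewrite -leNgt => ?; exists j.
Qed.

Lemma measurable_grid_pick g k j b : measurable_fun setT (grid_pick g k j b).
Proof.
elim: k j => [|k IH] j /=; first exact: measurable_cst.
apply: measurable_fun_ifT; [|exact: IH|exact: measurable_cst].
by apply: measurable_fun_ltr; [exact: measurable_id | exact: measurable_cst].
Qed.

Lemma grid_pick_near_argmax k b eta : d * r ^+ k <= eta -> eta < d ->
  let t := grid_pick near_argmax k 0 b eta in
  0 < t /\ (1 - r) * (eta * t) <= conj_V U eta + 1 /\ conj_V U eta <= 2 * (U t + 1).
Proof.
move=> eta_ge eta_lt; cbv zeta.
have eta_lt0 : eta < d * r ^+ 0 by rewrite expr0 mulr1.
have eta_gek : d * r ^+ (0 + k) <= eta by rewrite add0n.
have [m [-> eta_ge' eta_lt']] := grid_pickP near_argmax b eta_lt0 eta_gek.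
apply: near_argmax_grid => //.
- by apply: lt_le_trans eta_ge'; rewrite mulr_gt0 // exprn_gt0.
- by rewrite mulrCA -exprS.
- by apply: ler_piMr; rewrite ?exprn_ile1 ?ltW.
Qed.

End doubling.

Section EV_finite_propagation.
Variables (R : realType) (dm : measure_display) (Omega : measurableType dm).
Variables (P : probability Omega R) (U : R -> R) (Z : Omega -> R).
Hypothesis U_nondecr : forall x y : R, 0 < x -> x <= y -> U x <= U y.
Hypothesis U_sublinear : (fun x : R => U x / x) @ +oo%R --> (0 : R).
Hypothesis Z_gt0 : forall w, 0 < Z w.
Hypothesis mZ : measurable_fun setT Z.
Variables (delta r : R).
Hypotheses (delta_gt0 : 0 < delta) (r_gt0 : 0 < r) (r_lt1 : r < 1).
Hypothesis V_gt0 : forall e, 0 < e -> e < delta -> 0 < conj_V U e.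
Hypothesis V_doubling :
  forall e, 0 < e -> r * e < delta -> conj_V U (r * e) <= 2 * conj_V U e.

Lemma measurable_conj_V_pos y : 0 < y ->
  measurable_fun setT (fun w => Num.max (conj_V U (y * Z w)) 0).
Proof.
move=> y_gt0; apply: measurable_maxr; last exact: measurable_cst.
exact: measurable_conj_V_comp.
Qed.

Lemma EV_finite_scale y : 0 < y -> EV_finite P U Z y -> EV_finite P U Z (r * y).
Proof.
move=> y_gt0 EVy; apply: le_lt_trans.
  apply: (@integral_le_affine _ _ _ P _ (fun w => Num.max (conj_V U (y * Z w)) 0) 2
    (Num.max (conj_V U delta) 0)) => //.
  - by rewrite le_max lexx orbT.
  - exact/measurable_EFinP/measurable_conj_V_pos/mulr_gt0.
  - exact: measurable_conj_V_pos.
  - by move=> w; rewrite lee_fin le_max lexx orbT.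
  - by move=> w; rewrite le_max lexx orbT.
  move=> w; rewrite lee_fin -mulrA.
  apply: (conj_V_pos_doubling U_nondecr U_sublinear delta_gt0 r_gt0 V_gt0 V_doubling).
  exact: mulr_gt0.
by rewrite lte_add_pinfty ?ltry // lte_mul_pinfty.
Qed.

Lemma EV_finite_all y0 : 0 < y0 -> EV_finite P U Z y0 ->
  forall y, 0 < y -> EV_finite P U Z y.
Proof.
move=> y0_gt0 EVy0 y y_gt0.
have EV_rN n : EV_finite P U Z (r ^+ n * y0).
  elim: n => [|n IH]; first by rewrite expr0 mul1r.
  by rewrite exprS -mulrA; apply: EV_finite_scale; rewrite // mulr_gt0 // exprn_gt0.
have [N] := exists_expr_lt r_gt0 r_lt1 (divr_gt0 y_gt0 y0_gt0).
rewrite ltr_pdivlMr // => rN_lt.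
apply: le_lt_trans (EV_rN N); apply: ge0_le_integral => //.
- by move=> w _; rewrite lee_fin le_max lexx orbT.
- exact/measurable_EFinP/measurable_conj_V_pos.
- exact/measurable_EFinP/measurable_conj_V_pos/mulr_gt0/y0_gt0/exprn_gt0.
move=> w _; rewrite lee_fin le_max2 // conj_V_nonincr ?ler_pM2r ?ltW //.
by rewrite mulr_gt0 // mulr_gt0 // exprn_gt0.
Qed.

Definition trunc_EV y s w := if Z w < s then 0 else Num.max (conj_V U (y * Z w)) 0.

Lemma trunc_EV_ge0 y s w : 0 <= trunc_EV y s w.
Proof. by rewrite /trunc_EV; case: ifP => // _; rewrite le_max lexx orbT. Qed.

Lemma measurable_trunc_EV y s : 0 < y -> measurable_fun setT (trunc_EV y s).
Proof.
move=> y_gt0; apply: measurable_fun_ifT; last exact: measurable_conj_V_pos.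
- by apply: measurable_fun_ltr => //; exact: measurable_cst.
- exact: measurable_cst.
Qed.

Lemma trunc_EV_le_conj_V y s w : 0 < y -> 0 < s ->
  trunc_EV y s w <= Num.max (conj_V U (y * s)) 0.
Proof.
move=> y_gt0 s_gt0; rewrite /trunc_EV.
case: ifPn => [_|]; first by rewrite le_max lexx orbT.
by rewrite -leNgt => sZ; rewrite le_max2 // conj_V_nonincr ?ler_pM2l // mulr_gt0.
Qed.

Lemma trunc_EV_doubling y s w : 0 < y ->
  trunc_EV (r * y) s w <= 2 * trunc_EV y s w + Num.max (conj_V U delta) 0.
Proof.
move=> y_gt0; rewrite /trunc_EV -mulrA.
case: ifP => _; first by rewrite mulr0 add0r le_max lexx orbT.
apply: (conj_V_pos_doubling U_nondecr U_sublinear delta_gt0 r_gt0 V_gt0 V_doubling).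
exact: mulr_gt0.
Qed.

Section construction.
Variables (x0 M : R).
Hypothesis x0_gt0 : 0 < x0.
Hypothesis value_le : (value_u P Z x0 U <= M%:E)%E.
Hypothesis Z_integrable : (\int[P]_w (Z w)%:E < +oo)%E.

Let IZ := fine (\int[P]_w (Z w)%:E).
Let b := x0 / (2 * (IZ + 1)).
Let K := Num.max (conj_V U delta) 0.
Let kappa := 1 + `|U b| + K.
Let c := (1 - r)^-1.

Let IZ_ge0 : 0 <= IZ.
Proof. by apply: fine_ge0; apply: integral_ge0 => w _; rewrite lee_fin ltW. Qed.

Let int_Z : (\int[P]_w (Z w)%:E)%E = IZ%:E.
Proof.
by rewrite fineK // ge0_fin_numE // integral_ge0 // => w _; rewrite lee_fin ltW.
Qed.

Let b_gt0 : 0 < b.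
Proof. by rewrite divr_gt0 // mulr_gt0 //; have := IZ_ge0; lra. Qed.

Let b_IZ : b * IZ <= x0 / 2.
Proof.
have IZ0 := IZ_ge0.
have -> : b * IZ = x0 / 2 * (IZ / (IZ + 1)) by rewrite /b; field; lra.
apply: ler_piMr; first by rewrite divr_ge0 // ltW.
by rewrite ler_pdivrMr; lra.
Qed.

Let K_ge0 : 0 <= K. Proof. by rewrite le_max lexx orbT. Qed.

Let c_gt0 : 0 < c. Proof. by rewrite invr_gt0 subr_gt0. Qed.

(* Invest [b] where [Z] is small or [y Z] is large, and near maximizers of
   [U t - t e] on the geometric grid [e = delta r^m] in between. *)
Definition strategy y s N w :=
  if Z w < s then b
  else if y * Z w < delta then grid_pick delta r (near_argmax U) N 0 b (y * Z w) else b.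

Lemma measurable_strategy y s N : measurable_fun setT (strategy y s N).
Proof.
have mlt (g : Omega -> R) a :
    measurable_fun setT g -> measurable_fun setT (fun w => g w < a).
  by move=> mg; apply: measurable_fun_ltr => //; exact: measurable_cst.
have myZ : measurable_fun setT (fun w => y * Z w).
  by apply: measurable_funM => //; exact: measurable_cst.
apply: measurable_fun_ifT; [exact: mlt|exact: measurable_cst|].
apply: measurable_fun_ifT; [exact: mlt| |exact: measurable_cst].
by apply: measurableT_comp; first exact: measurable_grid_pick.
Qed.

Lemma strategy_pointwise y s N w : 0 < y -> 0 < s -> delta * r ^+ N <= y * s ->
  let f := strategy y s N w in
  [/\ 0 < f, Z w * f <= c / y * trunc_EV y s w + b * Z w + c / y
    & trunc_EV y s w <= 2 * (U f + kappa)].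
Proof.
move=> y_gt0 s_gt0 grid_bottom; cbv zeta.
have b0 := b_gt0; have K0 := K_ge0; have kappaE : kappa = 1 + `|U b| + K by [].
have Z_gt0w := Z_gt0 w; have cy_gt0 : 0 < c / y by rewrite divr_gt0.
have Ub_le : U b <= `|U b| := ler_norm _.
have Ub_ge : - `|U b| <= U b by rewrite lerNl -normrN ler_norm.
have tr_ge0 := trunc_EV_ge0 y s w.
have cy_tr : 0 <= c / y * trunc_EV y s w by apply: mulr_ge0 => //; exact: ltW.
have Zb : Z w * b <= b * Z w by rewrite mulrC.
move: tr_ge0 cy_tr; rewrite /strategy /trunc_EV.
case: ifPn => [_ _ _|]; first by split => //; lra.
rewrite -leNgt => sZ tr_ge0 cy_tr; have yZ_gt0 : 0 < y * Z w by rewrite mulr_gt0.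
have [yZ_lt|yZ_ge] := ltP (y * Z w) delta; last first.
  have trK : Num.max (conj_V U (y * Z w)) 0 <= K.
    by rewrite le_max2 // conj_V_nonincr.
  by split => //; lra.
have grid_le : delta * r ^+ N <= y * Z w.
  by apply: le_trans grid_bottom _; rewrite ler_pM2l.
have [t_gt0 [t_cost t_util]] := grid_pick_near_argmax U_nondecr U_sublinear
  delta_gt0 r_gt0 r_lt1 V_gt0 V_doubling b grid_le yZ_lt.
set t := grid_pick _ _ _ _ _ _ _ in t_gt0 t_cost t_util *.
have V_pos := V_gt0 yZ_gt0 yZ_lt.
rewrite max_l; last exact: ltW.
split => //; last lra.
have -> : Z w * t = (y * Z w * t) / y by field; rewrite gt_eqF.
have : y * Z w * t / y <= c * (conj_V U (y * Z w) + 1) / y.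
  rewrite ler_pM2r ?invr_gt0 //.
  by rewrite /c [_^-1 * _]mulrC ler_pdivlMr ?subr_gt0 // mulrC.
have -> : c * (conj_V U (y * Z w) + 1) / y = c / y * conj_V U (y * Z w) + c / y.
  by field; rewrite gt_eqF.
have : 0 <= b * Z w by rewrite mulr_ge0 ?ltW.
lra.
Qed.

Lemma strategy_Cset y s N i : 0 < y -> 0 < s -> delta * r ^+ N <= y * s ->
  (\int[P]_w (trunc_EV y s w)%:E)%E = i%:E -> c * (i + 1) <= y * (x0 / 2) ->
  Cset P Z x0 (strategy y s N).
Proof.
move=> y_gt0 s_gt0 grid_bottom int_tr budget.
have pw w := strategy_pointwise w y_gt0 s_gt0 grid_bottom.
have cy_gt0 : 0 < c / y by rewrite divr_gt0.
split; first exact: measurable_strategy.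
split; first by move=> w; have [/ltW] := pw w.
apply: le_trans.
  apply: (@integral_le_lin _ _ _ P _ (trunc_EV y s) Z (c / y) b (c / y));
    rewrite ?ltW //.
  - by apply/measurable_EFinP/measurable_funM => //; exact: measurable_strategy.
  - exact: measurable_trunc_EV.
  - by move=> w; rewrite lee_fin mulr_ge0 ?ltW //; have [] := pw w.
  - exact: trunc_EV_ge0.
  - by move=> w; rewrite ltW.
  - by move=> w; have [] := pw w.
rewrite int_tr int_Z -!EFinM -!EFinD lee_fin.
have : c / y * i + c / y <= x0 / 2.
  have -> : c / y * i + c / y = c * (i + 1) / y by field; rewrite gt_eqF.
  by rewrite ler_pdivrMr // [_ * y]mulrC.
by have := b_IZ; lra.
Qed.

Lemma trunc_EV_le y s i : 0 < y -> 0 < s ->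
  (\int[P]_w (trunc_EV y s w)%:E)%E = i%:E -> c * (i + 1) <= y * (x0 / 2) ->
  i <= 2 * (M + kappa).
Proof.
move=> y_gt0 s_gt0 int_tr budget.
have [N] := exists_expr_lt r_gt0 r_lt1 (divr_gt0 (mulr_gt0 y_gt0 s_gt0) delta_gt0).
rewrite ltr_pdivlMr // mulrC => /ltW grid_bottom.
have pw w := strategy_pointwise w y_gt0 s_gt0 grid_bottom.
have int_half : (\int[P]_w (trunc_EV y s w / 2)%:E)%E = (i / 2)%:E.
  rewrite (eq_integral (fun w => (2^-1)%:E * (trunc_EV y s w)%:E)%E); last first.
    by move=> w _; rewrite -EFinM mulrC.
  rewrite ge0_integralZl //; first by rewrite int_tr -EFinM mulrC.
  - exact/measurable_EFinP/measurable_trunc_EV.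
  - by move=> w _; rewrite lee_fin trunc_EV_ge0.
have kappa_ge0 : 0 <= kappa by rewrite !addr_ge0.
have EU_lb : ((i / 2 - kappa)%:E <= EU P U (strategy y s N))%E.
  apply: (@EU_ge _ _ _ P U U_nondecr _ (fun w => trunc_EV y s w / 2)) => //.
  - exact: measurable_strategy.
  - by move=> w; have [] := pw w.
  - by apply: measurable_funM; [exact: measurable_trunc_EV | exact: measurable_cst].
  - by move=> w; rewrite divr_ge0 ?trunc_EV_ge0.
  - by move=> w; have [_ _] := pw w; lra.
have EU_le : (EU P U (strategy y s N) <= M%:E)%E.
  apply: le_trans value_le; apply: ereal_sup_ubound; exists (strategy y s N) => //.
  exact: strategy_Cset int_tr budget.
by have := le_trans EU_lb EU_le; rewrite lee_fin; lra.
Qed.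

Let K1 := Num.max (conj_V U 1) 0.
Let L := Num.max K1 (4 * (M + kappa) + K) + 1.
(* Above [y_star] the budget condition of [trunc_EV_le] holds whenever the
   truncated expectation is at most [L]. *)
Let y_star := 2 * c * (L + 1) / x0.

Let L_gt0 : 0 < L.
Proof. by rewrite ltr_pwDr // le_max le_max lexx orbT. Qed.

Let y_star_gt0 : 0 < y_star.
Proof. by rewrite !divr_gt0 ?mulr_gt0 //; have := L_gt0; lra. Qed.

Lemma trunc_EV_step y s : y_star <= y -> 0 < s ->
  (\int[P]_w (trunc_EV y s w)%:E <= L%:E)%E ->
  (\int[P]_w (trunc_EV (r * y) s w)%:E <= L%:E)%E.
Proof.
move=> y_ge s_gt0 int_le; have y_gt0 := lt_le_trans y_star_gt0 y_ge.
have L_ge : 4 * (M + kappa) + K + 1 <= L by rewrite lerD2r le_max lexx orbT.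
have int_ge0 : (0 <= \int[P]_w (trunc_EV y s w)%:E)%E.
  by apply: integral_ge0 => w _; rewrite lee_fin trunc_EV_ge0.
move: int_le int_ge0; case int_tr: (\int[P]_w (trunc_EV y s w)%:E)%E => [i| |] //.
rewrite !lee_fin => i_le i_ge0.
have budget : c * (i + 1) <= y * (x0 / 2).
  apply: le_trans (_ : y_star * (x0 / 2) <= _); last by rewrite ler_pM2r ?divr_gt0.
  have -> : y_star * (x0 / 2) = c * (L + 1) by rewrite /y_star; field; rewrite gt_eqF.
  by rewrite ler_pM2l //; lra.
have := trunc_EV_le y_gt0 s_gt0 int_tr budget => i_bound.
apply: le_trans.
  apply: (@integral_le_affine _ _ _ P _ (trunc_EV y s) 2 K) => //.
  - exact/measurable_EFinP/measurable_trunc_EV/mulr_gt0.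
  - exact: measurable_trunc_EV.
  - by move=> w; rewrite lee_fin trunc_EV_ge0.
  - exact: trunc_EV_ge0.
  - by move=> w; rewrite lee_fin trunc_EV_doubling.
by rewrite int_tr -EFinM -EFinD lee_fin; lra.
Qed.

Lemma trunc_EV_bounded s : 0 < s ->
  (\int[P]_w (trunc_EV y_star s w)%:E <= L%:E)%E.
Proof.
move=> s_gt0.
have down n : (\int[P]_w (trunc_EV (y_star / r ^+ n) s w)%:E <= L%:E)%E ->
    (\int[P]_w (trunc_EV y_star s w)%:E <= L%:E)%E.
  elim: n => [|n IH]; first by rewrite expr0 divr1.
  move=> int_le; apply: IH.
  have -> : y_star / r ^+ n = r * (y_star / r ^+ n.+1).
    by rewrite exprS; field; rewrite expf_neq0 ?gt_eqF.
  apply: trunc_EV_step => //.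
  rewrite ler_pdivlMr ?exprn_gt0 //; apply: ler_piMr; first exact: ltW.
  by rewrite exprn_ile1 ?ltW.
have [N rN_lt] := exists_expr_lt r_gt0 r_lt1 (mulr_gt0 y_star_gt0 s_gt0).
have yN_gt0 : 0 < y_star / r ^+ N by rewrite divr_gt0 ?exprn_gt0.
apply: (down N); apply: integral_le_cst; first exact: ltW.
- exact/measurable_EFinP/measurable_trunc_EV.
- by move=> w; rewrite lee_fin trunc_EV_ge0.
move=> w; rewrite lee_fin; apply: le_trans (trunc_EV_le_conj_V w yN_gt0 s_gt0) _.
apply: (@le_trans _ _ K1); last first.
  have : K1 <= Num.max K1 (4 * (M + kappa) + K) by rewrite le_max lexx.
  by rewrite /L; lra.
rewrite le_max2 // conj_V_nonincr // mulrAC ler_pdivlMr ?exprn_gt0 // mul1r ltW //.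
Qed.

Lemma EV_finite_exists : exists2 y, 0 < y & EV_finite P U Z y.
Proof.
exists y_star => //; rewrite /EV_finite.
pose g n w := (trunc_EV y_star n.+1%:R^-1 w)%:E.
have mg n : measurable_fun setT (g n).
  exact/measurable_EFinP/measurable_trunc_EV.
have g_ge0 n w : (0 <= g n w)%E by rewrite lee_fin trunc_EV_ge0.
have g_nd w : {homo (fun n => g n w) : n m / (n <= m)%N >-> (n <= m)%E}.
  move=> n m nm; rewrite /g /trunc_EV lee_fin.
  have inv_le : m.+1%:R^-1 <= n.+1%:R^-1 :> R by rewrite lef_pV2 ?posrE // ler_nat ltnS.
  case: ifPn => [_|]; first by case: ifP => _; rewrite // le_max lexx orbT.
  by rewrite -leNgt => Zn; rewrite ifN // -leNgt (le_trans inv_le).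
have g_lim w : limn (fun n => g n w) = (Num.max (conj_V U (y_star * Z w)) 0)%:E.
  apply: lim_near_cst => //; have := near_infty_natSinv_lt (PosNum (Z_gt0 w)).
  by apply: filterS => n Zn; rewrite /g /trunc_EV ltNge (ltW Zn).
under eq_integral do rewrite -g_lim.
rewrite (monotone_convergence _ measurableT (fun n => mg n) (fun n w _ => g_ge0 n w)
  (fun w _ => g_nd w)).
apply: le_lt_trans (ltry L); apply: lime_le.
  apply: ereal_nondecreasing_is_cvgn => n m nm.
  by apply: ge0_le_integral => // w _; exact: g_nd.
by apply: nearW => n; apply: trunc_EV_bounded; rewrite invr_gt0.
Qed.

End construction.

End EV_finite_propagation.

Theorem lemma3p2 (R : realType) (d : measure_display) (Omega : measurableType d)
  (P : probability Omega R) (T : R) (F : R -> set (set Omega)) (lam : R)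
  (S Z0 Z1 : R -> Omega -> R) (U : R -> R) :
  0 < T ->
  usual_conditions P T F ->
  0 < lam < 1 ->
  (forall t w, 0 <= t <= T -> 0 < S t w) ->
  adapted T F S -> cadlag T S ->
  consistent_price_system P T F lam S Z0 Z1 ->
  utility U ->
  (EAE (conj_V U) < +oo)%E ->
  ((forall y, 0 < y -> EV_finite P U (Z0 T) y) <->
   (exists x, 0 < x /\ (value_u P (Z0 T) x U < +oo)%E)).
Proof.
move=> T_gt0 [[F_filt _] _] _ _ _ _ [Z_pos [_ [[Z_adapted [Z_int _]] _]]] Uu EAE_fin.
have T_in : 0 <= T <= T by rewrite lexx andbT ltW.
have Z_gt0 w : 0 < Z0 T w by have [] := Z_pos T w T_in.
have mZ : measurable_fun setT (Z0 T).
  by move=> _ B mB; rewrite setTI; apply: (F_filt T T_in).2; exact: Z_adapted.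
have [_ [U_nondecr [_ [_ U_sublinear]]]] := Uu.
split=> [EV_fin | [x [x_gt0 value_fin]]].
  exists 1; split => //.
  apply: le_lt_trans (value_u_le_EV P U_nondecr U_sublinear 1 ltr01 mZ Z_gt0) _.
  by rewrite lte_add_pinfty ?ltry ?EV_fin.
have Z_integrable : (\int[P]_w (Z0 T w)%:E < +oo)%E.
  move: (Z_int T T_in) => /integrableP [_]; apply: le_lt_trans.
  apply: ge0_le_integral => //; first by move=> w _; rewrite lee_fin ltW.
  - exact/measurable_EFinP.
  - exact/measurableT_comp/measurable_EFinP.
  - by move=> w _; rewrite lee_fin ler_norm.
have value_le : (value_u P (Z0 T) x U <= (fine (value_u P (Z0 T) x U))%:E)%E.
  by move: value_fin; case: (value_u _ _ _ _) => [v| |] //= _; rewrite leNye.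
have [delta [r [delta_gt0 r_gt0 r_lt1 V_gt0 V_doubling]]] := conj_V_doubling Uu EAE_fin.
have [y y_gt0 EVy] := EV_finite_exists U_nondecr U_sublinear Z_gt0 mZ delta_gt0 r_gt0
  r_lt1 V_gt0 V_doubling x_gt0 value_le Z_integrable.
exact: (EV_finite_all U_nondecr U_sublinear Z_gt0 mZ delta_gt0 r_gt0 r_lt1 V_gt0
  V_doubling y_gt0 EVy).
Qed.
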